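(* If $G$ is a simple graph whose vertices are among the variables of $S=\mathbb{K}[x_1,\dots,x_n]$, $\mathbb{K}$ a field, then $\operatorname{sreg}(S/I(G))\le\operatorname{box}(\overline{G})$.
   Context: $\overline{G}$ is the complement graph of $G$. The boxicity $\operatorname{box}(H)$ of a graph $H$ is the minimum $k$ such that $H$ is the intersection graph of a family of axis-parallel boxes in $\mathbb{R}^k$; equivalently, it is the smallest number of co-interval spanning subgraphs of $\overline{H}$ whose edge sets cover $E(\overline{H})$ (an interval graph is an intersection graph of intervals on the real line; a co-interval graph is the complement of an interval graph). $I(G)=(xy : \{x,y\}\in E(G))$ is the edge ideal. Stanley regularity: for a squarefree monomial ideal $I\subset S$, a squarefree Stanley decomposition of $S/I$ is a decomposition $S/I=\bigoplus_{i=1}^r u_i\mathbb{K}[Z_i]$ as $\mathbb{K}$-vector spaces, where $Z_i\subseteq\{x_1,\dots,x_n\}$, $u_i$ are (images of) squarefree monomials with $\operatorname{supp}(u_i)\subseteq Z_i$, and each $u_i\mathbb{K}[Z_i]$ is free over $\mathbb{K}[Z_i]$. Its Stanley regularity is $\max_i\deg(u_i)$, and $\operatorname{sreg}(S/I)$ is the minimum over all such decompositions. *)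

From HB Require Import structures.
From mathcomp Require Import all_boot all_order all_algebra.
From mathcomp Require Import multinomials.mpoly.
From Stdlib Require Rdefinitions Rbasic_fun.

Set Implicit Arguments.
Unset Strict Implicit.
Unset Printing Implicit Defensive.

Import GRing.Theory.
Local Open Scope ring_scope.

Record simple_graph (n : nat) := SimpleGraph {
  gV : {set 'I_n};
  gE : rel 'I_n;
  gE_sym : ssrbool.symmetric gE;
  gE_irr : irreflexive gE;
  gE_sub : forall u v, gE u v -> (u \in gV) && (v \in gV)
}.

Definition compl_adj n (G : simple_graph n) (u v : 'I_n) : bool :=
  [&& u \in gV G, v \in gV G, u != v & ~~ gE G u v].

(* H (given by vertex set V and adjacency adj) is the intersection graph of a
   family of closed axis-parallel boxes in R^k:
   box of v = prod_j [l v j, r v j]. Two boxes intersect iff for every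
   coordinate j, max (l u j) (l v j) <= min (r u j) (r v j). *)
Definition box_representable n (V : {set 'I_n}) (adj : rel 'I_n) (k : nat) : Prop :=
  exists l r : 'I_n -> 'I_k -> Rdefinitions.R,
    (forall v j, Rdefinitions.Rle (l v j) (r v j)) /\
    (forall u v, u \in V -> v \in V -> u != v ->
       (adj u v <-> forall j, Rdefinitions.Rle (Rbasic_fun.Rmax (l u j) (l v j)) (Rbasic_fun.Rmin (r u j) (r v j)))).

Definition boxicity_le n (V : {set 'I_n}) (adj : rel 'I_n) (k : nat) : Prop :=
  exists k', (k' <= k)%N /\ box_representable V adj k'.

Definition sqfree_mon (K : fieldType) n (U : {set 'I_n}) : {mpoly K[n]} :=
  \prod_(i in U) 'X_i.

(* Membership in the subring K[Z] (polynomials in the variables of Z only). *)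
Definition in_subring (K : fieldType) n (Z : {set 'I_n}) (p : {mpoly K[n]}) : Prop :=
  forall m, m \in msupp p -> forall i : 'I_n, i \notin Z -> m i = 0%N.

Definition in_edge_ideal (K : fieldType) n (G : simple_graph n) (f : {mpoly K[n]}) : Prop :=
  exists g : 'I_n -> 'I_n -> {mpoly K[n]},
    f = \sum_(u : 'I_n) \sum_(v : 'I_n | gE G u v) g u v * 'X_u * 'X_v.

(* A squarefree Stanley decomposition S/I(G) = (+)_i u_i K[Z_i], given as a
   list of pairs (U_i, Z_i) with u_i = prod_{x in U_i} x and U_i \subset Z_i.
   The condition "S/I = (+)_i u_i K[Z_i] as K-vector spaces with each
   u_i K[Z_i] free over K[Z_i]" is stated in S: every f in S can be written
   as f = g + sum_i u_i h_i with g in I and h_i in K[Z_i], and uniquely so. *)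
Definition stanley_decomposition (K : fieldType) n (G : simple_graph n)
    (D : seq ({set 'I_n} * {set 'I_n})) : Prop :=
  (forall p, p \in D -> p.1 \subset p.2) /\
  (forall f : {mpoly K[n]}, exists (g : {mpoly K[n]}) (h : 'I_(size D) -> {mpoly K[n]}),
     [/\ in_edge_ideal G g,
         forall i : 'I_(size D), in_subring (nth (set0, set0) D i).2 (h i)
       & f = g + \sum_(i < size D) sqfree_mon K (nth (set0, set0) D i).1 * h i]) /\
  (forall (g g' : {mpoly K[n]}) (h h' : 'I_(size D) -> {mpoly K[n]}),
     in_edge_ideal G g -> in_edge_ideal G g' ->
     (forall i : 'I_(size D), in_subring (nth (set0, set0) D i).2 (h i)) ->
     (forall i : 'I_(size D), in_subring (nth (set0, set0) D i).2 (h' i)) ->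
     g + \sum_(i < size D) sqfree_mon K (nth (set0, set0) D i).1 * h i =
     g' + \sum_(i < size D) sqfree_mon K (nth (set0, set0) D i).1 * h' i ->
     g = g' /\ forall i : 'I_(size D), h i = h' i).

(* Stanley regularity of a decomposition: max_i deg(u_i) = max_i |U_i|. *)
Definition stanley_reg n (D : seq ({set 'I_n} * {set 'I_n})) : nat :=
  \max_(p <- D) #|p.1|.

(* sreg(S/I(G)) <= k  (sreg is the minimum over all decompositions). *)
Definition sreg_le (K : fieldType) n (G : simple_graph n) (k : nat) : Prop :=
  exists D, stanley_decomposition K G D /\ (stanley_reg D <= k)%N.

From mathcomp Require Import all_boot all_order all_algebra.
From mathcomp Require Import multinomials.mpoly.

Set Implicit Arguments.
Unset Strict Implicit.
Unset Printing Implicit Defensive.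

Import GRing.Theory.

(* The monomials whose support is an independent set of G form a K-basis of
   S/I(G), so a partition of the independent sets of G into intervals [U, Z]
   with Z independent gives the Stanley decomposition S/I(G) = (+) x_U K[Z],
   of Stanley regularity max |U|.  Given boxes in R^k representing the
   complement of G, order the vertices in each coordinate j by the right end
   of their j-th interval.  For an independent set A let rho(A) consist of the
   first vertex of A in each of the k orders, so |rho(A)| <= k.  The
   independent sets A with rho(A) = U form the interval [U, Z(U)], where Z(U)
   consists of the vertices that, for every j, come after the j-th leader of
   U and whose j-th interval reaches its right end.  Any two members of Z(U)
   thus have j-th intervals sharing that right end for every j, so their
   boxes meet and Z(U) is independent in G. *)

Section EdgeIdeal.
Variables (K : fieldType) (n : nat) (G : simple_graph n).
Local Open Scope ring_scope.

Definition mnm_support (m : 'X_{1..n}) : {set 'I_n} := [set i | m i != 0%N].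

Definition mnm_of_set (U : {set 'I_n}) : 'X_{1..n} := [multinom ((i \in U) : nat) | i < n].

Definition independent (A : {set 'I_n}) : bool :=
  [forall u, forall v, (u \in A) && (v \in A) ==> ~~ gE G u v].

Lemma independentP A u v : independent A -> u \in A -> v \in A -> ~~ gE G u v.
Proof. by move=> /forallP /(_ u) /forallP /(_ v) /implyP iA uA vA; apply: iA; rewrite uA vA. Qed.

Lemma independentS (A B : {set 'I_n}) : A \subset B -> independent B -> independent A.
Proof.
move=> /subsetP sAB iB; apply/forallP => u; apply/forallP => v.
by apply/implyP => /andP[uA vA]; apply: (independentP iB); apply: sAB.
Qed.

Lemma sqfree_monE U : sqfree_mon K U = 'X_[mnm_of_set U].
Proof.
rewrite /sqfree_mon mpolyXE_id big_mkcond /=; apply: eq_bigr => i _.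
by rewrite mnmE; case: (i \in U); rewrite ?expr1 ?expr0.
Qed.

Lemma mcoeffMX_if (q : {mpoly K[n]}) w m :
  (q * 'X_[w])@_m = if (w <= m)%MM then q@_(m - w) else 0.
Proof.
case: ifP => le_wm; first by rewrite -{1}(submK le_wm) addmC mcoeffMX.
apply: memN_msupp_eq0; rewrite (perm_mem (msuppMX q w)).
by apply/mapP => -[m' _ Em]; rewrite Em lem_addr in le_wm.
Qed.

Lemma mcoeff_sqfree_monM (U : {set 'I_n}) (h : {mpoly K[n]}) m :
  (sqfree_mon K U * h)@_(mnm_of_set U + m) = h@_m.
Proof. by rewrite sqfree_monE mulrC mcoeffMX. Qed.

Lemma edge_ideal0 : in_edge_ideal G (0 : {mpoly K[n]}).
Proof.
exists (fun _ _ => 0); symmetry; apply: big1 => u _; apply: big1 => v _.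
by rewrite !mul0r.
Qed.

Lemma edge_idealD (g1 g2 : {mpoly K[n]}) :
  in_edge_ideal G g1 -> in_edge_ideal G g2 -> in_edge_ideal G (g1 + g2).
Proof.
move=> [a ->] [b ->]; exists (fun u v => a u v + b u v).
rewrite -big_split /=; apply: eq_bigr => u _; rewrite -big_split /=.
by apply: eq_bigr => v _; rewrite !mulrDl.
Qed.

Lemma edge_idealMXX (q : {mpoly K[n]}) u v :
  gE G u v -> in_edge_ideal G (q * 'X_u * 'X_v).
Proof.
move=> Euv; exists (fun a b => if (a == u) && (b == v) then q else 0).
rewrite (bigD1 u) //= (bigD1 v) //= !eqxx /= big1 ?addr0; last first.
  by move=> b /andP[_ /negbTE ->]; rewrite !mul0r.
rewrite big1 ?addr0 // => a /negbTE au; apply: big1 => b _.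
by rewrite au !mul0r.
Qed.

Lemma mcoeff_edge_ideal (g : {mpoly K[n]}) m :
  in_edge_ideal G g -> independent (mnm_support m) -> g@_m = 0.
Proof.
move=> [gg ->] im; rewrite raddf_sum; apply: big1 => u _.
rewrite raddf_sum; apply: big1 => v Euv.
rewrite -mulrA -mpolyXD; apply: (etrans (mcoeffMX_if _ _ _)); case: ifP => // /mnm_lepP le_uv_m.
have le_u := le_uv_m u; have le_v := le_uv_m v.
rewrite !mnmDE !mnm1E !eqxx in le_u le_v.
have uS : u \in mnm_support m by rewrite inE -lt0n (leq_trans _ le_u) ?leq_addr.
have vS : v \in mnm_support m by rewrite inE -lt0n (leq_trans _ le_v) ?leq_addl.
by have := independentP im uS vS; rewrite Euv.
Qed.

Lemma subring0 (Z : {set 'I_n}) : in_subring Z (0 : {mpoly K[n]}).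
Proof. by move=> m; rewrite mcoeff_msupp mcoeff0 eqxx. Qed.

Lemma subringD (Z : {set 'I_n}) (p q : {mpoly K[n]}) :
  in_subring Z p -> in_subring Z q -> in_subring Z (p + q).
Proof. by move=> Zp Zq m /msuppD_le; rewrite mem_cat => /orP[/Zp | /Zq]. Qed.

Lemma subringB (Z : {set 'I_n}) (p q : {mpoly K[n]}) :
  in_subring Z p -> in_subring Z q -> in_subring Z (p - q).
Proof. by move=> Zp Zq m /msuppB_le; rewrite mem_cat => /orP[/Zp | /Zq]. Qed.

Definition in_interval (p : {set 'I_n} * {set 'I_n}) (A : {set 'I_n}) :=
  (p.1 \subset A) && (A \subset p.2).

Lemma mcoeff_sqfree_monM_support (p : {set 'I_n} * {set 'I_n}) (h : {mpoly K[n]}) m :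
  p.1 \subset p.2 -> in_subring p.2 h -> (sqfree_mon K p.1 * h)@_m != 0 ->
  in_interval p (mnm_support m).
Proof.
case: p => U Z /= /subsetP sUZ Zh; rewrite sqfree_monE mulrC mcoeffMX_if.
case: ifP => [/mnm_lepP le_Um|]; last by rewrite eqxx.
rewrite -mcoeff_msupp => /Zh Zm; apply/andP; split; apply/subsetP => i.
  by move=> iU; have := le_Um i; rewrite mnmE iU inE -lt0n.
rewrite inE; apply: contraR => iZ.
have iU : i \notin U by apply: contra iZ; apply: sUZ.
by have := Zm i iZ; rewrite mnmBE mnmE (negbTE iU) subn0 => ->.
Qed.


Lemma mnm_of_set_le (U : {set 'I_n}) m :
  U \subset mnm_support m -> (mnm_of_set U <= m)%MM.
Proof.
move=> /subsetP sUm; apply/mnm_lepP => j; rewrite mnmE.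
by case: (boolP (j \in U)) => // /sUm; rewrite inE lt0n.
Qed.

Lemma edge_ideal_monomial (c : K) m :
  ~~ independent (mnm_support m) -> in_edge_ideal G (c *: 'X_[m]).
Proof.
move=> /forallPn [u /forallPn [v]]; rewrite negb_imply negbK.
move=> /andP[/andP[um vm] Euv].
have neq_uv : u != v by apply: contraTneq Euv => ->; rewrite (gE_irr G).
have le_uv_m : (U_(u) + U_(v) <= m)%MM.
  apply/mnm_lepP => j; rewrite mnmDE !mnm1E.
  move: um vm; rewrite !inE -!lt0n.
  case: (eqVneq u j) => uj; case: (eqVneq v j) => vj /=; subst => //.
  by rewrite eqxx in neq_uv.
rewrite -(submK le_uv_m) !mpolyXD mulrA !scalerAl.
exact: edge_idealMXX.
Qed.

Section IntervalPartition.
Variable D : seq ({set 'I_n} * {set 'I_n}).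
Hypothesis D_sub : forall p, p \in D -> p.1 \subset p.2.
Hypothesis D_independent : forall p, p \in D -> independent p.2.
Hypothesis D_cover : forall A, independent A -> exists2 p, p \in D & in_interval p A.
Hypothesis D_disjoint : forall A p q,
  p \in D -> q \in D -> in_interval p A -> in_interval q A -> p = q.
Hypothesis D_uniq : uniq D.

Local Notation part i := (nth (set0, set0) D i).

Definition stanley_expansion (f : {mpoly K[n]}) : Prop :=
  exists (g : {mpoly K[n]}) (h : 'I_(size D) -> {mpoly K[n]}),
    [/\ in_edge_ideal G g, forall i : 'I_(size D), in_subring (part i).2 (h i)
      & f = g + \sum_(i < size D) sqfree_mon K (part i).1 * h i].

Lemma part_mem (i : 'I_(size D)) : part i \in D.
Proof. exact: mem_nth. Qed.

Lemma stanley_expansion0 : stanley_expansion 0.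
Proof.
exists 0, (fun _ => 0); split; [exact: edge_ideal0 | move=> i; exact: subring0 |].
by rewrite add0r big1 // => i _; rewrite mulr0.
Qed.

Lemma stanley_expansionD f1 f2 :
  stanley_expansion f1 -> stanley_expansion f2 -> stanley_expansion (f1 + f2).
Proof.
move=> [g1 [h1 [I1 Z1 ->]]] [g2 [h2 [I2 Z2 ->]]].
exists (g1 + g2), (fun i => h1 i + h2 i); split.
- exact: edge_idealD.
- by move=> i; apply: subringD.
rewrite addrACA -big_split /=; congr (_ + _).
by apply: eq_bigr => i _; rewrite mulrDr.
Qed.

Lemma stanley_expansion_monomial (c : K) m : stanley_expansion (c *: 'X_[m]).
Proof.
have [im|nim] := boolP (independent (mnm_support m)); last first.
  exists (c *: 'X_[m]), (fun _ => 0); split; [exact: edge_ideal_monomial | |].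
    by move=> i; apply: subring0.
  by rewrite big1 ?addr0 // => i _; rewrite mulr0.
have [p pD /andP[sp1 sp2]] := D_cover im.
have iD : (index p D < size D)%N by rewrite index_mem.
pose i := Ordinal iD; have Ei : part i = p by rewrite /= nth_index.
exists 0, (fun j => if j == i then c *: 'X_[m - mnm_of_set p.1] else 0); split.
- exact: edge_ideal0.
- move=> j; case: eqP => [->|_]; last exact: subring0.
  rewrite Ei => m' /msuppZ_le; rewrite msuppX mem_seq1 => /eqP -> j' j'Z.
  have : j' \notin mnm_support m by apply: contra j'Z; apply: (subsetP sp2).
  by rewrite mnmBE inE negbK => /eqP ->.
rewrite add0r (bigD1 i) //= eqxx big1 ?addr0; last by move=> j /negbTE ->; rewrite mulr0.
by rewrite Ei sqfree_monE -scalerAr -mpolyXD addmC submK ?mnm_of_set_le.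
Qed.

Lemma stanley_spanning f : stanley_expansion f.
Proof.
rewrite (mpolyE f); apply: (big_ind stanley_expansion).
- exact: stanley_expansion0.
- exact: stanley_expansionD.
by move=> m _; apply: stanley_expansion_monomial.
Qed.

Lemma part_interval_eq (i j : 'I_(size D)) A :
  in_interval (part i) A -> in_interval (part j) A -> i = j.
Proof.
move=> Ii Ij; have /eqP := D_disjoint (part_mem i) (part_mem j) Ii Ij.
by rewrite nth_uniq // => /eqP /val_inj.
Qed.

Lemma mcoeff_part_support (i : 'I_(size D)) h m :
  in_subring (part i).2 h -> (sqfree_mon K (part i).1 * h)@_m != 0 ->
  in_interval (part i) (mnm_support m).
Proof.
exact/mcoeff_sqfree_monM_support/D_sub/part_mem.
Qed.

Lemma stanley_sum_eq0 (h : 'I_(size D) -> {mpoly K[n]}) :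
  (forall i : 'I_(size D), in_subring (part i).2 (h i)) ->
  \sum_(i < size D) sqfree_mon K (part i).1 * h i = 0 -> forall i, h i = 0.
Proof.
move=> Zh sum0 i; apply/mpolyP => m; rewrite mcoeff0; apply/eqP; apply: contraT => nz.
have := congr1 (mcoeff (mnm_of_set (part i).1 + m)) sum0.
rewrite mcoeff0 raddf_sum (bigD1 i) //= big1 ?addr0.
  by rewrite mcoeff_sqfree_monM => /eqP; rewrite (negbTE nz).
move=> j ji; apply/eqP; apply: contraR ji => nzj.
apply/eqP; apply: part_interval_eq (mcoeff_part_support (Zh j) nzj) _.
by apply: (mcoeff_part_support (Zh i)); rewrite mcoeff_sqfree_monM.
Qed.

Lemma stanley_unique (g g' : {mpoly K[n]}) (h h' : 'I_(size D) -> {mpoly K[n]}) :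
  in_edge_ideal G g -> in_edge_ideal G g' ->
  (forall i : 'I_(size D), in_subring (part i).2 (h i)) ->
  (forall i : 'I_(size D), in_subring (part i).2 (h' i)) ->
  g + \sum_(i < size D) sqfree_mon K (part i).1 * h i =
  g' + \sum_(i < size D) sqfree_mon K (part i).1 * h' i ->
  g = g' /\ forall i, h i = h' i.
Proof.
move=> Ig Ig' Zh Zh' E.
pose d i := h' i - h i.
have Zd (i : 'I_(size D)) : in_subring (part i).2 (d i) by apply: subringB.
have gB : g - g' = \sum_(i < size D) sqfree_mon K (part i).1 * d i.
  rewrite /d; under eq_bigr => i _ do rewrite mulrBr.
  by rewrite sumrB; apply/eqP; rewrite subr_eq addrAC eq_sym subr_eq E addrC.
have gg' : g = g'.
  apply/eqP; rewrite -subr_eq0; apply/eqP/mpolyP => m; rewrite mcoeff0.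
  have [im|nim] := boolP (independent (mnm_support m)).
    by rewrite mcoeffB (mcoeff_edge_ideal Ig im) (mcoeff_edge_ideal Ig' im) subrr.
  rewrite gB raddf_sum big1 // => i _; apply/eqP; apply: contraR nim => nz.
  have /andP[_ sZ] := mcoeff_part_support (Zd i) nz.
  exact: independentS sZ (D_independent (part_mem i)).
split=> // i; apply/eqP; rewrite eq_sym -subr_eq0; apply/eqP.
by apply: (stanley_sum_eq0 Zd); rewrite -gB gg' subrr.
Qed.

Lemma stanley_of_interval_partition : stanley_decomposition K G D.
Proof.
split; first exact: D_sub.
by split; [exact: stanley_spanning | exact: stanley_unique].
Qed.

End IntervalPartition.
End EdgeIdeal.

From Stdlib Require Import Rdefinitions Rbasic_fun RIneq Lra.

Definition Rltb (x y : R) : bool := if Rlt_dec x y then true else false.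
Definition Rleb (x y : R) : bool := if Rle_dec x y then true else false.

Lemma RltbP x y : reflect (Rlt x y) (Rltb x y).
Proof. by rewrite /Rltb; case: Rlt_dec => h; constructor. Qed.

Lemma RlebP x y : reflect (Rle x y) (Rleb x y).
Proof. by rewrite /Rleb; case: Rle_dec => h; constructor. Qed.

Section BoxIntervals.
Variables (n k : nat) (G : simple_graph n) (l r : 'I_n -> 'I_k -> R).
Hypothesis box_le : forall v j, Rle (l v j) (r v j).
Hypothesis box_meet : forall u v, u \in gV G -> v \in gV G -> u != v ->
  (compl_adj G u v <-> forall j, Rle (Rmax (l u j) (l v j)) (Rmin (r u j) (r v j))).

Local Notation V := (gV G).

(* Ties are broken by index, making [before j] a strict total order. *)
Definition before j (a b : 'I_n) : bool :=
  Rltb (r a j) (r b j) || Rleb (r a j) (r b j) && (a < b).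

Lemma before_irr j a : before j a a = false.
Proof. by rewrite /before ltnn andbF orbF; apply/RltbP; lra. Qed.

Lemma before_trans j a b c : before j a b -> before j b c -> before j a c.
Proof.
rewrite /before => /orP[/RltbP ab|/andP[/RlebP ab ab']] /orP[/RltbP bc|/andP[/RlebP bc bc']];
  try by apply/orP; left; apply/RltbP; lra.
case: (RltbP (r a j) (r c j)) => //= _.
by apply/andP; split; [apply/RlebP; lra | exact: ltn_trans ab' bc'].
Qed.

Lemma before_total j a b : a != b -> before j a b || before j b a.
Proof.
move=> neq_ab; rewrite /before.
case: (RltbP (r a j) (r b j)) => //= ab; case: (RltbP (r b j) (r a j)) => ba; rewrite ?orbT //=.
have -> : r a j = r b j by apply: Rle_antisym; apply: Rnot_lt_le.
have -> : Rleb (r b j) (r b j) by apply/RlebP; lra.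
by case: (ltngtP a b) => // /val_inj eq_ab; rewrite eq_ab eqxx in neq_ab.
Qed.

Definition rank j (a : 'I_n) := #|[set b | before j b a]|.

Lemma rank_lt j a b : before j a b -> (rank j a < rank j b).
Proof.
move=> ab; apply: proper_card; apply/properP; split.
  by apply/subsetP => c; rewrite !inE => ca; apply: before_trans ca ab.
by exists a; rewrite !inE ?ab ?before_irr.
Qed.

Lemma rank_anti j a b : (rank j a <= rank j b) -> (rank j b <= rank j a) -> a = b.
Proof.
move=> ab ba; apply/eqP; apply: contraT => neq_ab.
by case/orP: (before_total j neq_ab) => /rank_lt; rewrite ltnNge ?ab ?ba.
Qed.

Lemma rank_le_r j a b : (rank j a <= rank j b) -> Rle (r a j) (r b j).
Proof.
move=> ab; case: (eqVneq a b) => [->|neq_ab]; first lra.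
case/orP: (before_total j neq_ab) => [|/rank_lt]; last by rewrite ltnNge ab.
by rewrite /before => /orP[/RltbP|/andP[/RlebP ? _]]; lra.
Qed.

Definition leader j (A : {set 'I_n}) : option 'I_n :=
  [pick t in A :&: V | [forall w in A :&: V, rank j t <= rank j w]].

Lemma leader_Some j A t : leader j A = Some t ->
  t \in A :&: V /\ forall w, w \in A :&: V -> (rank j t <= rank j w).
Proof. by rewrite /leader; case: pickP => // t' /andP[At' /forall_inP min_t'] [<-]. Qed.

Lemma leader_SomeI j A t : t \in A :&: V ->
  (forall w, w \in A :&: V -> (rank j t <= rank j w)) -> leader j A = Some t.
Proof.
move=> At min_t; rewrite /leader; case: pickP => [t' /andP[At' /forall_inP min_t']|].
  by congr Some; apply: rank_anti; [apply: min_t' | apply: min_t].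
by move/(_ t); rewrite At /= => /negbT/negP[]; apply/forall_inP.
Qed.

Lemma leader_None j A w : leader j A = None -> w \notin A :&: V.
Proof.
move=> A0; apply/negP => Aw; case: (arg_minnP (rank j) Aw) => t At min_t.
by rewrite (leader_SomeI At min_t) in A0.
Qed.

Lemma leader_NoneI j A : (forall w, w \notin A :&: V) -> leader j A = None.
Proof. by rewrite /leader => AV0; case: pickP => // t /andP[At _]; move: (AV0 t); rewrite At. Qed.

Lemma leaderS j (A B : {set 'I_n}) t :
  leader j A = Some t -> B \subset A -> t \in B -> leader j B = Some t.
Proof.
move=> /leader_Some[/setIP[_ tV] min_t] sBA tB; apply: leader_SomeI; first by rewrite inE tB.
by move=> w /setIP[wB wV]; apply: min_t; rewrite inE (subsetP sBA) ?wV.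
Qed.

Definition leaders (A : {set 'I_n}) : {set 'I_n} :=
  [set t in pmap (leader^~ A) (enum 'I_k)].

Lemma leadersP A t : reflect (exists j, leader j A = Some t) (t \in leaders A).
Proof.
rewrite inE mem_pmap; apply: (iffP mapP) => [[j _ At]|[j At]]; first by exists j.
by exists j; rewrite ?mem_enum.
Qed.

Lemma eq_leaders A B : (forall j, leader j A = leader j B) -> leaders A = leaders B.
Proof. by move=> eq_AB; apply/setP => t; rewrite !inE (eq_pmap eq_AB). Qed.

Lemma card_leaders A : (#|leaders A| <= k).
Proof.
rewrite cardsE (leq_trans (card_size _)) // size_pmap.
by rewrite (leq_trans (count_size _ _)) ?size_enum_ord.
Qed.

Lemma leaders_sub A : leaders A \subset A.
Proof. by apply/subsetP => t /leadersP[j /leader_Some[/setIP[]]]. Qed.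

Lemma leader_leaders j A : leader j (leaders A) = leader j A.
Proof.
case At: (leader j A) => [t|].
  by apply: (leaderS At (leaders_sub A)); apply/leadersP; exists j.
apply: leader_NoneI => w; apply: contra (leader_None w At).
by move=> /setIP[/(subsetP (leaders_sub A)) wA wV]; rewrite inE wA.
Qed.

Lemma leadersK A : leaders (leaders A) = leaders A.
Proof. by apply: eq_leaders => j; apply: leader_leaders. Qed.

Lemma nonadjacent_l_le_r j w t : w \in V -> t \in V -> ~~ gE G w t -> Rle (l w j) (r t j).
Proof.
move=> wV tV nE; case: (eqVneq w t) => [->|neq_wt]; first exact: box_le.
have [meet _] := box_meet wV tV neq_wt.
have := meet ltac:(by rewrite /compl_adj wV tV neq_wt nE) j.
by have := Rmax_l (l w j) (l t j); have := Rmin_r (r w j) (r t j); lra.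
Qed.

(* Variables that are not vertices of G follow every [U]. *)
Definition followers (U : {set 'I_n}) : {set 'I_n} :=
  [set w | (w \notin V) || [forall j, if leader j U is Some t then
       Rleb (l w j) (r t j) && (rank j t <= rank j w) else false]].

Lemma sub_followers_leaders A : independent G A -> A \subset followers (leaders A).
Proof.
move=> iA; apply/subsetP => w wA; rewrite inE; case: (boolP (w \in V)) => //= wV.
apply/forallP => j; rewrite leader_leaders.
case At: (leader j A) => [t|]; last by have := leader_None w At; rewrite inE wA wV.
have [/setIP[tA tV] min_t] := leader_Some At.
apply/andP; split; last by apply: min_t; rewrite inE wA.
by apply/RlebP; apply: nonadjacent_l_le_r => //; apply: (independentP iA).
Qed.

Lemma followers_independent U : independent G (followers U).
Proof.
apply/forallP => w; apply/forallP => w'; apply/implyP => /andP[].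
rewrite !inE => Uw Uw'; apply/negP => E.
have /andP[wV w'V] := gE_sub E; rewrite wV w'V /= in Uw Uw'.
have neq_ww' : w != w' by apply: contraTneq E => ->; rewrite (gE_irr G).
have [_ meet] := box_meet wV w'V neq_ww'.
suff : compl_adj G w w' by rewrite /compl_adj E !andbF.
apply: meet => j; move: Uw Uw' => /forallP /(_ j) + /forallP /(_ j).
case: (leader j U) => [t|] // /andP[/RlebP lw /rank_le_r rw] /andP[/RlebP lw' /rank_le_r rw'].
by apply: Rmax_lub; apply: Rmin_glb; try apply: box_le; lra.
Qed.

Lemma leaders_between (U A : {set 'I_n}) :
  leaders U = U -> U \subset A -> A \subset followers U -> leaders A = U.
Proof.
move=> UU sUA sAF; rewrite -[RHS]UU; apply: eq_leaders => j.
have follow w : w \in A :&: V -> if leader j U is Some t then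
    Rleb (l w j) (r t j) && (rank j t <= rank j w) else false.
  by move=> /setIP[/(subsetP sAF)]; rewrite inE => /orP[/negP|/forallP] //.
case Ut: (leader j U) follow => [t|] follow.
  have [/setIP[tU tV] _] := leader_Some Ut.
  apply: leader_SomeI => [|w /follow /andP[] //]; by rewrite inE (subsetP sUA).
by apply: leader_NoneI => w; apply/negP => /follow.
Qed.

Definition box_intervals : seq ({set 'I_n} * {set 'I_n}) :=
  [seq (U, followers U) | U <- enum [set U | independent G U && (leaders U == U)]].

Lemma box_intervalsP p : p \in box_intervals ->
  exists U, [/\ p = (U, followers U), independent G U & leaders U = U].
Proof. by case/mapP => U; rewrite mem_enum inE => /andP[iU /eqP UU] ->; exists U. Qed.

Lemma box_intervals_stanley (K : fieldType) : stanley_decomposition K G box_intervals.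
Proof.
apply: stanley_of_interval_partition.
- by move=> p /box_intervalsP[U [-> iU UU]] /=; have := sub_followers_leaders iU; rewrite UU.
- by move=> p /box_intervalsP[U [-> _ _]]; apply: followers_independent.
- move=> A iA; exists (leaders A, followers (leaders A)).
    apply: map_f; rewrite mem_enum inE leadersK eqxx andbT.
    exact: independentS (leaders_sub A) iA.
  by rewrite /in_interval /= leaders_sub sub_followers_leaders.
- move=> A p q /box_intervalsP[U [-> _ UU]] /box_intervalsP[U' [-> _ UU']].
  rewrite /in_interval /= => /andP[sUA sAF] /andP[sU'A sAF'].
  by rewrite -(leaders_between UU sUA sAF) -(leaders_between UU' sU'A sAF').
by rewrite map_inj_uniq ?enum_uniq // => U U' [].
Qed.

Lemma stanley_reg_box_intervals : (stanley_reg box_intervals <= k).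
Proof.
rewrite /stanley_reg big_map; apply/bigmax_leqP_seq => U.
by rewrite mem_enum inE => /andP[_ /eqP <-] _; apply: card_leaders.
Qed.

End BoxIntervals.

Theorem corollary5p11 (K : fieldType) (n : nat) (G : simple_graph n) (k : nat) :
  boxicity_le (gV G) (compl_adj G) k -> sreg_le K G k.
Proof.
move=> [k' [le_k'k [l [r [box_le box_meet]]]]].
exists (box_intervals G l r); split; first exact: box_intervals_stanley.
exact: leq_trans (stanley_reg_box_intervals G l r) le_k'k.
Qed.
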